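(* It holds that $L_{BA}=\begin{pmatrix} 1/w_{BA} & v_{BA}/w_{BA} \\ v_{BA}/w_{BA} & 1/w_{BA} \end{pmatrix}$.
   Context: The model is a discrete one-dimensional environment populated by stateless automata (''elementary bodies''); each time step an elementary body either moves one coordinate unit in its direction or reverses direction. A body is a finite set of elementary bodies; an inertial body is one with constant spatial velocity and constant proper time velocity. For inertial bodies $A,B$, $O_B$ is the reference frame associated with $B$ (events written as column vectors $\begin{pmatrix} x\\ \tau_B\end{pmatrix}$ of space coordinate and proper time of $B$), in which $B$ has coordinate $x_{BB}\equiv 0$ and proper time velocity $1$. $v_{BA}$ and $w_{BA}$ denote the (constant) spatial velocity and proper time velocity of $B$ in the reference frame $O_A$, so that $x_{BA}(\tau_A)=v_{BA}\tau_A$ and $\tau_{BA}(\tau_A)=w_{BA}\tau_A$ when origins coincide. $L_{BA}:O_B\to O_A$ is the map sending coordinates of an event in $O_B$ to its coordinates in $O_A$; coordinates in different inertial frames are related affinely, the origins of $O_A$ and $O_B$ are assumed to coincide, so $L_{BA}$ is linear with matrix $\begin{pmatrix} a_{11} & a_{12} \\ a_{21} & a_{22} \end{pmatrix}$. Since $\begin{pmatrix} 1\\1\end{pmatrix}$ and $\begin{pmatrix} -1\\1\end{pmatrix}$ are eigenvectors of $L_{BA}$ (standard configuration), $a_{11}=a_{22}$ and $a_{12}=a_{21}$. *)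

From HB Require Import structures.
From mathcomp Require Import all_boot all_order all_algebra.
Set Implicit Arguments. Unset Strict Implicit. Unset Printing Implicit Defensive.
Import Order.TTheory GRing.Theory Num.Theory.
Local Open Scope ring_scope.

(* An event in a reference frame: column vector (x, tau)^T;
   row index 0 = space coordinate, row index 1 = proper time. *)
Definition event {R : pzRingType} (x t : R) : 'cV[R]_2 :=
  \col_(i < 2) (if i == 0 then x else t).

Definition mx2 {R : pzRingType} (a b c d : R) : 'M[R]_2 :=
  \matrix_(i < 2, j < 2)
     (if i == 0 then (if j == 0 then a else b) else (if j == 0 then c else d)).

From HB Require Import structures.
From mathcomp Require Import all_boot all_order all_algebra.
From mathcomp Require Import lra ring.
Set Implicit Arguments.
Unset Strict Implicit.
Unset Printing Implicit Defensive.

Import Order.TTheory GRing.Theory Num.Theory.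
Local Open Scope ring_scope.

(* The eigenvector conditions on the light-like vectors (1,1) and (-1,1) force
   L = ( a b ; b a ).  Feeding the worldline of B, i.e. the O_B event
   (0, w_BA), into such a matrix yields (b w_BA, a w_BA) = (v_BA, 1). *)

Lemma event_inj (R : pzRingType) (x t x' t' : R) :
  event x t = event x' t' -> x = x' /\ t = t'.
Proof.
move=> e; have := congr1 (fun M : 'cV[R]_2 => M 0 0) e.
have := congr1 (fun M : 'cV[R]_2 => M 1 0) e.
by rewrite /event !mxE.
Qed.

Lemma scale_event (R : pzRingType) (a x t : R) :
  a *: event x t = event (a * x) (a * t).
Proof. by apply/matrixP => i j; rewrite !mxE; case: ifP. Qed.

Lemma mx2_entries (R : pzRingType) (L : 'M[R]_2) :
  L = mx2 (L 0 0) (L 0 1) (L 1 0) (L 1 1).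
Proof.
apply/matrixP => i j; rewrite mxE.
by case: i => [[|[|//]] Hi]; case: j => [[|[|//]] Hj]; congr (L _ _); apply: val_inj.
Qed.

Lemma mulmx_mx2_event (R : pzRingType) (a b c d x t : R) :
  mx2 a b c d *m event x t = event (a * x + b * t) (c * x + d * t).
Proof.
apply/matrixP => i j; rewrite !mxE !big_ord_recl big_ord0 addr0 !mxE /=.
by case: ifP.
Qed.

Lemma light_cone_eigen_mx2 (R : realDomainType) (a b c d : R) :
  (exists lam : R, mx2 a b c d *m event 1 1 = lam *: event 1 1) ->
  (exists mu : R, mx2 a b c d *m event (-1) 1 = mu *: event (-1) 1) ->
  c = b /\ d = a.
Proof.
case=> lam; rewrite mulmx_mx2_event scale_event => /event_inj[e1 e2].
case=> mu; rewrite mulmx_mx2_event scale_event => /event_inj[e3 e4].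
rewrite !mulr1 !mulrN1 in e1 e2 e3 e4.
have sum_eq : a + b = c + d by rewrite e1 e2.
have diff_eq : - a + b = - (- c + d) by rewrite e3 e4.
by split; lra.
Qed.

Lemma mx2_worldline (R : fieldType) (a b v w : R) : w != 0 ->
  mx2 a b b a *m event 0 w = event v 1 ->
  mx2 a b b a = mx2 (1 / w) (v / w) (v / w) (1 / w).
Proof.
move=> w0; rewrite mulmx_mx2_event !mulr0 !add0r => /event_inj[hv ha].
have -> : a = 1 / w by rewrite -ha; field.
by have -> : b = v / w by rewrite -hv; field.
Qed.

Theorem theorem2 (R : realFieldType) (L : 'M[R]_2) (v w : R)
  (hw : 0 < w)
  (heig1 : exists lam : R, L *m event 1 1 = lam *: event 1 1)
  (heig2 : exists mu : R, L *m event (-1) 1 = mu *: event (-1) 1)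
  (hB : forall tA : R, L *m event 0 (w * tA) = event (v * tA) tA) :
  L = mx2 (1 / w) (v / w) (v / w) (1 / w).
Proof.
rewrite (mx2_entries L) in heig1 heig2 hB *.
have [hc hd] := light_cone_eigen_mx2 heig1 heig2.
rewrite hc hd in hB *.
have := hB 1; rewrite !mulr1.
exact: mx2_worldline (lt0r_neq0 hw).
Qed.
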